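(* Let $S=\langle T,\Pi,C\rangle$ be a state space and let $(A_i,\psi_i)$, $1\le i\le k$, be abstractions of $S$ forming an additive abstraction system. Let $t,g\in T$ and let $\pi$ be a path from $t$ to $g$ in $S$ with $C(\pi)=\sum_{i=1}^k C^*_i(t_i,g_i)$. Then $\sum_{i=1}^k C^*_i(t_i,g_i)\ge C^*_j(t_j,g_j)+R^*_j(t_j,g_j)$ for all $j\in\{1,\dots,k\}$.
   Context: A state space is a weighted directed graph $S=\langle T,\Pi,C\rangle$ where $T$ is a finite set of states, $\Pi\subseteq T\times T$ is a set of directed edges, and $C:\Pi\to\mathbb{N}=\{0,1,2,\dots\}$. A path from $u$ to $v$ is a sequence of edges $\langle\pi^1,\dots,\pi^n\rangle$ with $\pi^j=(u^{j-1},u^j)\in\Pi$, $u^0=u$, $u^n=v$; its cost is $C(\pi)=\sum_j C(\pi^j)$. An abstract state space is $A_i=\langle T_i,\Pi_i,C_i,R_i\rangle$ with $T_i$ a set of abstract states, $\Pi_i\subseteq T_i\times T_i$, and edge weights $C_i,R_i:\Pi_i\to\mathbb{N}$ (primary and residual cost), extended additively to paths. An abstraction of $S$ is a pair $(A_i,\psi_i)$ with $\psi_i:T\to T_i$ such that (1) for every $(u,v)\in\Pi$, $(\psi_i(u),\psi_i(v))\in\Pi_i$, and (2) for every $\pi=(u,v)\in\Pi$, $C_i(\pi_i)+R_i(\pi_i)\le C(\pi)$ where $\pi_i=(\psi_i(u),\psi_i(v))$. The system is additive if for every $\pi\in\Pi$, $\sum_{i=1}^k C_i(\pi_i)\le C(\pi)$.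 Write $t_i=\psi_i(t)$. Define $C^*_i(x,y)=\min\{C_i(\rho):\rho\text{ a path from }x\text{ to }y\text{ in }A_i\}$; $P_i(x,y)$ is the set of paths $\rho$ from $x$ to $y$ in $A_i$ with $C_i(\rho)=C^*_i(x,y)$, and $R^*_i(x,y)=\min_{\rho\in P_i(x,y)}R_i(\rho)$. *)

From mathcomp Require Import all_boot.
Set Implicit Arguments. Unset Strict Implicit. Unset Printing Implicit Defensive.

(* A path from x to y in a graph with edge relation e is represented by its
   list of visited vertices after x: [x; p_1; ...; p_n] with e between
   consecutive vertices and last x p = y (n = 0 allowed: the empty path). *)
Definition is_path {V : Type} (e : rel V) (x y : V) (p : seq V) : Prop :=
  path e x p /\ last x p = y.

Definition pcost {V : Type} (w : V -> V -> nat) (x : V) (p : seq V) : nat :=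
  sumn (pairmap w x p).

Definition is_Cstar {V : Type} (e : rel V) (w : V -> V -> nat) (x y : V) (c : nat) : Prop :=
  (exists p, is_path e x y p /\ pcost w x p = c) /\
  (forall p, is_path e x y p -> c <= pcost w x p).

Definition is_opt_path {V : Type} (e : rel V) (w : V -> V -> nat) (x y : V) (p : seq V) : Prop :=
  is_path e x y p /\ forall q, is_path e x y q -> pcost w x p <= pcost w x q.

Definition is_Rstar {V : Type} (e : rel V) (w res : V -> V -> nat) (x y : V) (r : nat) : Prop :=
  (exists p, is_opt_path e w x y p /\ pcost res x p = r) /\
  (forall p, is_opt_path e w x y p -> r <= pcost res x p).

(* (A, psi) is an abstraction of the state space S = <T, E, C>, where
   A = <TA, EA, CA, RA>. Costs are total functions, only relevant on edges. *)
Definition is_abstraction {T TA : Type} (E : rel T) (C : T -> T -> nat)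
  (EA : rel TA) (CA RA : TA -> TA -> nat) (psi : T -> TA) : Prop :=
  (forall u v, E u v -> EA (psi u) (psi v)) /\
  (forall u v, E u v -> CA (psi u) (psi v) + RA (psi u) (psi v) <= C u v).

Definition is_additive {T : Type} {k : nat} (E : rel T) (C : T -> T -> nat)
  (TA : 'I_k -> Type) (CA : forall i, TA i -> TA i -> nat)
  (psi : forall i, T -> TA i) : Prop :=
  forall u v, E u v -> \sum_(i < k) CA i (psi i u) (psi i v) <= C u v.

From mathcomp Require Import all_boot.

Set Implicit Arguments.
Unset Strict Implicit.
Unset Printing Implicit Defensive.

(* The projection of pi to abstraction j is a path of primary cost at least
   C*_j; additivity bounds the sum of these costs by C(pi) = sum_i C*_i, so
   each projection is primary-optimal and has residual cost at least R*_j.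
   Adding primary and residual cost of the j-th projection, which is bounded
   by C(pi) since (A_j, psi_j) is an abstraction, gives the claim. *)

Lemma map_is_path (T U : Type) (E : rel T) (EU : rel U) (f : T -> U) x y p :
  (forall u v, E u v -> EU (f u) (f v)) ->
  is_path E x y p -> is_path EU (f x) (f y) (map f p).
Proof.
move=> homE [Ep <-]; split; last by rewrite last_map.
elim: p x Ep => [|a p IHp] x //= /andP[Exa Ep].
by rewrite homE //= IHp.
Qed.

Lemma pcost_map_le (T U : Type) (E : rel T) (C : T -> T -> nat)
  (CA RA : U -> U -> nat) (f : T -> U) x p :
  (forall u v, E u v -> CA (f u) (f v) + RA (f u) (f v) <= C u v) ->
  path E x p -> pcost CA (f x) (map f p) + pcost RA (f x) (map f p) <= pcost C x p.
Proof.
rewrite /pcost => leC; elim: p x => [|a p IHp] x //= /andP[Exa Ep].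
by rewrite addnACA leq_add ?leC ?IHp.
Qed.

Lemma sum_pcost_map_le (T : Type) (k : nat) (E : rel T) (C : T -> T -> nat)
  (TA : 'I_k -> Type) (CA : forall i, TA i -> TA i -> nat)
  (psi : forall i, T -> TA i) x p :
  is_additive E C CA psi -> path E x p ->
  \sum_(i < k) pcost (CA i) (psi i x) (map (psi i) p) <= pcost C x p.
Proof.
rewrite /pcost => addC; elim: p x => [|a p IHp] x /=; first by rewrite big1.
by case/andP=> Exa Ep; rewrite big_split leq_add ?addC ?IHp.
Qed.

Lemma eq_sum_le (I : finType) (F G : I -> nat) :
  (forall i, F i <= G i) -> \sum_i G i <= \sum_i F i -> forall j, F j = G j.
Proof.
move=> leFG leGF j.
have [_] := leqif_sum (fun i (_ : true) => leqif_eq (leFG i)).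
by rewrite eqn_leq leGF leq_sum // => /esym/forall_inP/(_ j isT)/eqP.
Qed.

Lemma Cstar_le (V : Type) (e : rel V) (w : V -> V -> nat) x y c p :
  is_Cstar e w x y c -> is_path e x y p -> c <= pcost w x p.
Proof. by case=> _ minc; apply: minc. Qed.

Lemma is_opt_path_Cstar (V : Type) (e : rel V) (w : V -> V -> nat) x y c p :
  is_Cstar e w x y c -> is_path e x y p -> pcost w x p = c ->
  is_opt_path e w x y p.
Proof. by move=> Cc ep costp; split=> // q; rewrite costp; apply: Cstar_le. Qed.

Lemma Rstar_le (V : Type) (e : rel V) (w res : V -> V -> nat) x y r p :
  is_Rstar e w res x y r -> is_opt_path e w x y p -> r <= pcost res x p.
Proof. by case=> _ minr; apply: minr. Qed.

Theorem lemma9 (T : finType) (E : rel T) (C : T -> T -> nat) (k : nat)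
  (TA : 'I_k -> Type) (EA : forall i, rel (TA i))
  (CA RA : forall i, TA i -> TA i -> nat) (psi : forall i, T -> TA i)
  (Habs : forall i, is_abstraction E C (EA i) (CA i) (RA i) (psi i))
  (Hadd : is_additive E C CA psi)
  (t g : T) (p : seq T) (Hp : is_path E t g p)
  (cstar rstar : 'I_k -> nat)
  (Hc : forall i, is_Cstar (EA i) (CA i) (psi i t) (psi i g) (cstar i))
  (Hr : forall i, is_Rstar (EA i) (CA i) (RA i) (psi i t) (psi i g) (rstar i))
  (Hcost : pcost C t p = \sum_(i < k) cstar i) :
  forall j : 'I_k, cstar j + rstar j <= \sum_(i < k) cstar i.
Proof.
move=> j; have [Ep _] := Hp.
have pathA i : is_path (EA i) (psi i t) (psi i g) (map (psi i) p).
  by apply: map_is_path Hp => u v; case: (Habs i) => homE _; apply: homE.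
have costA : forall i, cstar i = pcost (CA i) (psi i t) (map (psi i) p).
  apply: (@eq_sum_le _ cstar (fun i => pcost (CA i) (psi i t) (map (psi i) p))).
    by move=> i; apply: Cstar_le (Hc i) (pathA i).
  by rewrite -Hcost; exact: sum_pcost_map_le Hadd Ep.
have optj := is_opt_path_Cstar (Hc j) (pathA j) (esym (costA j)).
have [_ leCj] := Habs j.
rewrite -Hcost (costA j); apply: leq_trans (pcost_map_le leCj Ep).
by rewrite leq_add2l; apply: Rstar_le (Hr j) optj.
Qed.
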